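(* Let $q\equiv 3 \pmod 4$ be a prime power and let $P=\{(x,y,z)\in\mathbb{F}_q^3 : z=x^2+y^2\}$. There is an absolute constant $c>0$ such that for any $\lambda,\beta\in\mathbb{F}_q^*$ there exists a set $X\subset P$ with $|X|\ge c\,q^{5/3}$ containing no non-trivial $(\lambda,\beta)$-energy tuple.
   Context: Every point of $P$ is written as $x=(\underline{x},\underline{x}\cdot\underline{x})$ with $\underline{x}\in\mathbb{F}_q^2$, where $u\cdot v=u_1v_1+u_2v_2$. Four points $x,z,y,t\in\mathbb{F}_q^2$ form a rectangle (with vertices in the cyclic order $x,z,y,t$) if $(x-z)\cdot(y-z)=0$, $(z-y)\cdot(t-y)=0$, $(y-t)\cdot(x-t)=0$ and $(t-x)\cdot(z-x)=0$; the length of a side $uv$ is $(u-v)\cdot(u-v)$. A tuple $(a,b,c,d)\in P^4$ is a non-trivial energy tuple if $a+b=c+d$ and $a,b,c,d$ are pairwise distinct; it is a $(\lambda,\beta)$-energy tuple if moreover $\underline{a},\underline{c},\underline{b},\underline{d}$ form a rectangle with side-lengths $\lambda$ and $\beta$. *)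

From mathcomp Require Import all_boot all_order all_algebra all_field.
From Stdlib Require Import Reals.
Set Implicit Arguments. Unset Strict Implicit. Unset Printing Implicit Defensive.
Import GRing.Theory.
Local Open Scope ring_scope.

(* Points of F_q^2 are pairs (u1,u2); points of F_q^3 are ((x,y),z), so that
   for p : F*F*F, p.1 is the planar part "underline p" and p.2 the last coordinate. *)

Definition dot (F : fieldType) (u v : F * F) : F := u.1 * v.1 + u.2 * v.2.
Definition sub2 (F : fieldType) (u v : F * F) : F * F := (u.1 - v.1, u.2 - v.2).
Definition add3 (F : fieldType) (a b : F * F * F) : F * F * F :=
  ((a.1.1 + b.1.1, a.1.2 + b.1.2), a.2 + b.2).

Definition paraboloid (F : finFieldType) : {set F * F * F} :=
  [set p | p.2 == p.1.1 ^+ 2 + p.1.2 ^+ 2].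

Definition sidelen (F : fieldType) (u v : F * F) : F := dot (sub2 u v) (sub2 u v).

(* x, z, y, t form a rectangle with vertices in cyclic order x, z, y, t *)
Definition rectangle (F : fieldType) (x z y t : F * F) : Prop :=
  [/\ dot (sub2 x z) (sub2 y z) = 0, dot (sub2 z y) (sub2 t y) = 0,
      dot (sub2 y t) (sub2 x t) = 0 & dot (sub2 t x) (sub2 z x) = 0].

Definition rectangle_sides (F : fieldType) (lam bet : F) (x z y t : F * F) : Prop :=
  rectangle x z y t /\
  ((sidelen x z = lam /\ sidelen z y = bet /\ sidelen y t = lam /\ sidelen t x = bet) \/
   (sidelen x z = bet /\ sidelen z y = lam /\ sidelen y t = bet /\ sidelen t x = lam)).

Definition nontriv_energy (F : fieldType) (a b c d : F * F * F) : Prop :=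
  add3 a b = add3 c d /\
  (a <> b /\ a <> c /\ a <> d /\ b <> c /\ b <> d /\ c <> d).

Definition lb_energy (F : fieldType) (lam bet : F) (a b c d : F * F * F) : Prop :=
  nontriv_energy a b c d /\ rectangle_sides lam bet a.1 c.1 b.1 d.1.

From mathcomp Require Import all_boot all_order all_algebra all_field.
From Stdlib Require Import Reals Lra.
From mathcomp Require Import ssrnat zify ring.
Set Implicit Arguments. Unset Strict Implicit. Unset Printing Implicit Defensive.
Import GRing.Theory.

(* Only the planar shadows of the points matter. If (a, b, c, d) is a (lam, bet)-energy
   tuple, then a + b = c + d makes its shadow the corner set {a, a+s+t, a+s, a+t} of a
   rectangle whose orthogonal sides s, t have squared lengths in {lam, bet}. There are at
   most 4q choices of s, and then at most 4 of t (they lie on the line orthogonal to s),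
   so O(q^3) such quadruples among the q^2 points of the plane. By the alteration method
   (keep each point with probability 1/K, K ~ q^(1/3), then delete one point of every
   surviving quadruple) a quadruple-free set of size >> q^2/K = q^(5/3) remains; its
   lift to the paraboloid is X. The random choice is derandomized by averaging over all
   colorings of the plane with K colors, keeping the points of color 0. *)

Lemma exists_leq_of_sum_leq (I : finType) (f g : I -> nat) :
  0 < #|I| -> \sum_i f i <= \sum_i g i -> exists i, f i <= g i.
Proof.
move=> /card_gt0P[i0 _] le_sum; apply/existsP; apply: contraLR le_sum.
move=> /existsPn lt_gf; rewrite -ltnNge (bigD1 i0) //= [X in _ < X](bigD1 i0) //=.
by rewrite -addSn leq_add // ?ltnNge ?lt_gf // leq_sum // => i _; rewrite ltnW // ltnNge lt_gf.
Qed.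

Lemma small_hitting_set (V : finType) (C : {set {set V}}) :
  set0 \notin C -> exists2 D : {set V}, #|D| <= #|C| & forall e, e \in C -> ~~ [disjoint e & D].
Proof.
move=> C0; pose pick_in (e : {set V}) := [pick v in e].
exists [set v | Some v \in pick_in @: C].
  apply: leq_trans (leq_imset_card pick_in C); rewrite -(card_imset _ Some_inj).
  by apply: subset_leq_card; apply/subsetP => _ /imsetP[v + ->]; rewrite inE.
move=> e eC; have: pick_in e \in pick_in @: C by apply: imset_f.
rewrite /pick_in; case: pickP => [v ev | e0] pick_e; last first.
  have e_0 : e = set0 by apply/setP => v; rewrite inE e0.
  by rewrite -e_0 eC in C0.
by apply/pred0Pn; exists v; rewrite /= ev inE.
Qed.

Lemma sum_card_rel (I J : finType) (R : I -> J -> bool) :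
  \sum_i #|[set j | R i j]| = \sum_j #|[set i | R i j]|.
Proof.
have card_set_sum (T : finType) (P : pred T) : #|[set x | P x]| = \sum_x P x.
  by rewrite -sum1_card big_mkcond; apply: eq_bigr => x _; rewrite inE; case: (P x).
rewrite (eq_bigr _ (fun i _ => card_set_sum _ (R i))) exchange_big.
by apply: eq_bigr => j _; rewrite card_set_sum.
Qed.

Section Alteration.
Variables (V : finType) (k : nat).
Local Notation K := k.+1.
Local Notation coloring := {ffun V -> 'I_K}.

Definition zero_set (g : coloring) : {set V} := [set v | g v == ord0].

Lemma card_colorings_zero_on (T : {set V}) :
  #|[set g : coloring | T \subset zero_set g]| = K ^ (#|V| - #|T|).
Proof.
pose allowed v := if v \in T then pred1 (@ord0 k) else predT.
have -> : [set g : coloring | T \subset zero_set g] = [set g | g \in finfun.family allowed].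
  apply/setP => g; rewrite !inE; apply/subsetP/familyP => [gT v | g_allowed v vT].
    by rewrite /allowed; case: ifP => // /gT; rewrite inE.
  by rewrite inE; have := g_allowed v; rewrite /allowed vT.
rewrite cardsE card_family foldrE big_map big_enum /= (bigID (mem T)) /=.
rewrite (eq_bigr (fun _ => 1)) => [|v vT]; last by rewrite /allowed vT card1.
rewrite [X in _ * X](eq_bigr (fun _ => K)) => [|v /negbTE vT]; last first.
  by rewrite /allowed vT cardT /= size_enum_ord.
by rewrite !prod_nat_const exp1n mul1n -(cardC T) addKn.
Qed.

Lemma sum_card_zero_set : \sum_(g : coloring) #|zero_set g| = #|V| * K ^ #|V|.-1.
Proof.
rewrite (eq_bigr (fun g => #|[set v | v \in zero_set g]|)) => [|g _]; last first.
  by apply: eq_card => v; rewrite inE.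
rewrite sum_card_rel -sum_nat_const; apply: eq_bigr => v _.
rewrite -subn1 -(cards1 v) -card_colorings_zero_on.
by apply: eq_card => g; rewrite [in RHS]inE sub1set inE.
Qed.

Variables (r : nat) (B : {set {set V}}).
Hypothesis B_large : forall e, e \in B -> r.+1 <= #|e|.

Definition edges_in (A : {set V}) : {set {set V}} := [set e in B | e \subset A].

Lemma sum_card_edges_in_zero_set :
  K ^ r.+1 * \sum_(g : coloring) #|edges_in (zero_set g)| <= #|B| * K ^ #|V|.
Proof.
rewrite (eq_bigr (fun g => #|[set e | (e \in B) && (e \subset zero_set g)]|)) //.
rewrite sum_card_rel big_distrr /= -sum_nat_const [X in _ <= X]big_mkcond /=.
apply: leq_sum => e _; case: ifP => eB; last first.
  by rewrite (_ : [set g | _] = set0) ?cards0 ?muln0 //; apply/setP => g; rewrite !inE eB.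
have -> : #|[set g | true && (e \subset zero_set g)]| = K ^ (#|V| - #|e|).
  by rewrite -card_colorings_zero_on; apply: eq_card => g; rewrite !inE.
rewrite -expnD leq_pexp2l // (leq_trans (leq_add (B_large eB) (leqnn _))) //.
by rewrite subnKC // max_card.
Qed.

Lemma exists_coloring_few_edges_in : exists g : coloring,
  K ^ r.+1 * #|edges_in (zero_set g)| + #|V| * K ^ r <= K ^ r.+1 * #|zero_set g| + #|B|.
Proof.
apply: exists_leq_of_sum_leq; first by rewrite card_ffun card_ord expn_gt0.
rewrite !big_split /= -!big_distrr !sum_nat_const /= card_ffun card_ord sum_card_zero_set.
have -> : K ^ r.+1 * (#|V| * K ^ #|V|.-1) = #|V| * (K ^ #|V| * K ^ r).
  case: #|V| => [|n]; first by rewrite !mul0n muln0.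
  by rewrite /= mulnCA -!expnD addSn addnC.
by rewrite addnC leq_add2l [leqRHS]mulnC; apply: sum_card_edges_in_zero_set.
Qed.

Lemma alteration : exists A : {set V},
  #|V| * K ^ r <= K ^ r.+1 * #|A| + #|B| /\ forall e, e \in B -> ~~ (e \subset A).
Proof.
have [g le_g] := exists_coloring_few_edges_in.
have [|D card_D hit_D] := @small_hitting_set _ (edges_in (zero_set g)).
  by apply/negP => /setIdP[/B_large]; rewrite cards0.
exists (zero_set g :\: D); split.
  have := cardsID D (zero_set g); have := subset_leq_card (subsetIr (zero_set g) D).
  by move: le_g; nia.
move=> e eB; apply/negP; rewrite subsetD => /andP[e_sub e_D].
have /hit_D : e \in edges_in (zero_set g) by rewrite inE eB.
by rewrite e_D.
Qed.

End Alteration.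

Lemma card_le_mul_fibers (aT rT : finType) (f : aT -> rT) (D : {set aT}) (S : {set rT}) m :
    {in D, forall x, f x \in S} ->
    (forall y, y \in S -> #|[set x in D | f x == y]| <= m) ->
  #|D| <= #|S| * m.
Proof.
move=> fDS fib; rewrite -sum1_card (partition_big f (mem S)) //= -sum_nat_const.
by apply: leq_sum => y yS; rewrite sum1dep_card fib.
Qed.

Lemma card_fiber_fst (T1 T2 : finType) (A : {set T1 * T2}) x :
  #|[set p in A | p.1 == x]| = #|[set y | (x, y) \in A]|.
Proof.
rewrite -[RHS](card_imset _ (fun y z (E : (x, y) = (x, z)) => congr1 snd E)).
apply: eq_card => -[x' y]; rewrite !inE /=; apply/andP/imsetP => [[xyA /eqP x'x] | [z]].
  by exists y; rewrite -x'x ?inE.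
by rewrite inE => xzA [-> ->]; rewrite xzA eqxx.
Qed.

Local Open Scope ring_scope.

Lemma card_sqr_eq (F : finFieldType) (e : F) : (#|[set y : F | y ^+ 2 == e]| <= 2)%N.
Proof.
case: (pickP [pred y : F | y ^+ 2 == e]) => [y0 y0_root | no_root]; last first.
  by rewrite (_ : [set y | _] = set0) ?cards0 //; apply/setP => y; rewrite !inE; exact: no_root.
apply: (@leq_trans #|[set y0; - y0]|); last by rewrite cards2 ltnS leq_b1.
by apply/subset_leq_card/subsetP => y; rewrite !inE -(eqP y0_root) eqf_sqr.
Qed.

Lemma dotC (F : fieldType) (u v : F * F) : dot u v = dot v u.
Proof. by rewrite /dot mulrC [u.2 * _]mulrC. Qed.

Lemma sidelenC (F : fieldType) (u v : F * F) : sidelen u v = sidelen v u.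
Proof. by rewrite /sidelen /dot /sub2 /=; ring. Qed.

Lemma orthogonal_eq_rot (F : fieldType) (s t : F * F) :
  dot s s != 0 -> dot s t = 0 -> exists r, t = (- (r * s.2), r * s.1).
Proof.
move: s t => [s1 s2] [t1 t2]; rewrite /dot /= => ss_n0 st0.
exists ((s1 * t2 - s2 * t1) / (s1 * s1 + s2 * s2)).
congr (_, _); apply: (mulIf ss_n0); rewrite ?mulNr mulrAC mulfVK //.
- transitivity (- ((s1 * t2 - s2 * t1) * s2) + s1 * (s1 * t1 + s2 * t2)); first ring.
  by rewrite st0 mulr0 addr0.
- transitivity ((s1 * t2 - s2 * t1) * s1 + s2 * (s1 * t1 + s2 * t2)); first ring.
  by rewrite st0 mulr0 addr0.
Qed.

Section RectangleQuads.
Variable F : finFieldType.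

Definition circle (e : F) : {set F * F} := [set s | dot s s == e].

Definition perp_circle (s : F * F) (e : F) : {set F * F} := [set t in circle e | dot s t == 0].

Lemma card_circle (e : F) : (#|circle e| <= #|F| * 2)%N.
Proof.
rewrite -cardsT; apply: (card_le_mul_fibers (f := fst)) => [s _|x _]; first by rewrite inE.
rewrite card_fiber_fst; apply: leq_trans (card_sqr_eq (e - x ^+ 2)).
by apply/subset_leq_card/subsetP => y; rewrite !inE /dot /= => /eqP <-; apply/eqP; ring.
Qed.

Lemma card_perp_circle (s : F * F) (e : F) :
  dot s s != 0 -> (#|perp_circle s e| <= 2)%N.
Proof.
move=> ss_n0; pose rot_s r : F * F := (- (r * s.2), r * s.1).
apply: leq_trans (card_sqr_eq (e / dot s s)); apply: leq_trans (leq_imset_card rot_s _).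
apply/subset_leq_card/subsetP => t; rewrite !inE => /andP[/eqP <- /eqP st0].
have [r ->] := orthogonal_eq_rot ss_n0 st0; apply: imset_f; rewrite inE.
by rewrite (_ : dot _ _ = r ^+ 2 * dot s s) ?mulfK // /dot /=; ring.
Qed.

Definition right_pairs (S : {set F}) : {set (F * F) * (F * F)} :=
  [set st | [&& dot st.1 st.1 \in S, dot st.2 st.2 \in S & dot st.1 st.2 == 0]].

Lemma card_right_pairs (S : {set F}) :
  0 \notin S -> (#|right_pairs S| <= 4 * #|S| ^ 2 * #|F|)%N.
Proof.
move=> S0; pose norm_in_S := [set s : F * F | dot s s \in S].
have card_norm_in_S : (#|norm_in_S| <= #|S| * (#|F| * 2))%N.
  apply: (card_le_mul_fibers (f := fun s => dot s s)) => [s|e _]; first by rewrite inE.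
  apply: leq_trans (card_circle e); apply/subset_leq_card/subsetP => s.
  by rewrite !inE => /andP[].
have card_partners s : s \in norm_in_S -> (#|[set p in right_pairs S | p.1 == s]| <= #|S| * 2)%N.
  rewrite inE => sS; rewrite card_fiber_fst.
  apply: (card_le_mul_fibers (f := fun t => dot t t)) => [t|e _]; first by rewrite !inE => /and3P[].
  have ss_n0 : dot s s != 0 by apply: contraNneq S0 => <-.
  apply: leq_trans (card_perp_circle e ss_n0); apply/subset_leq_card/subsetP => t.
  by rewrite !inE => /andP[/and3P[_ _ ->] ->].
have fst_norm_in_S : {in right_pairs S, forall st, st.1 \in norm_in_S}.
  by move=> st; rewrite !inE => /and3P[].
apply: leq_trans (card_le_mul_fibers fst_norm_in_S card_partners) _.
by apply: leq_trans (leq_mul card_norm_in_S (leqnn _)) _; apply: eq_leq; ring.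
Qed.

Definition corner_quad (a s t : F * F) : {set F * F} := [set a; a + s + t; a + s; a + t].

Lemma card_corner_quad (a s t : F * F) :
  dot s s != 0 -> dot t t != 0 -> dot s t = 0 -> #|corner_quad a s t| = 4%N.
Proof.
move=> ss_n0 tt_n0 st0; have dot0 (u : F * F) : dot 0 u = 0 by rewrite /dot /= !mul0r addr0.
have s_n0 : s != 0 by apply: contraNneq ss_n0 => ->; rewrite dot0.
have t_n0 : t != 0 by apply: contraNneq tt_n0 => ->; rewrite dot0.
have s_neq_t : s != t by apply: contraNneq ss_n0 => s_t; rewrite {2}s_t st0.
have st_n0 : s + t != 0.
  apply: contraNneq tt_n0 => st_0; apply/eqP; transitivity (dot (s + t) t - dot s t).
    by rewrite /dot /=; ring.
  by rewrite st_0 dot0 st0 subr0.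
have corners_uniq : uniq [:: a; a + s + t; a + s; a + t].
  have -> : [:: a; a + s + t; a + s; a + t] = map (fun x => a + x) [:: 0; s + t; s; t].
    by rewrite /= addr0 !addrA.
  rewrite (map_inj_uniq (addrI a)) /= !inE ![0 == _]eq_sym (negbTE st_n0) (negbTE s_n0).
  rewrite (negbTE t_n0) s_neq_t -{2}[s]addr0 (inj_eq (addrI s)) -{3}[t]add0r (inj_eq (addIr t)).
  by rewrite (negbTE t_n0) (negbTE s_n0).
rewrite (@eq_card _ _ (mem [:: a; a + s + t; a + s; a + t])) => [|x].
  exact/card_uniqP.
by rewrite /corner_quad !inE !orbA.
Qed.

Definition rect_quads (S : {set F}) : {set {set F * F}} :=
  [set corner_quad p.1 p.2.1 p.2.2 | p in setX [set: F * F] (right_pairs S)].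

Lemma card_rect_quads (S : {set F}) :
  0 \notin S -> (#|rect_quads S| <= 4 * #|S| ^ 2 * #|F| ^ 3)%N.
Proof.
move=> S0; apply: leq_trans (leq_imset_card _ _) _.
rewrite cardsX cardsT card_prod.
by apply: leq_trans (leq_mul (leqnn _) (card_right_pairs S0)) _; apply: eq_leq; ring.
Qed.

Lemma card_rect_quad (S : {set F}) e : 0 \notin S -> e \in rect_quads S -> #|e| = 4%N.
Proof.
move=> S0 /imsetP[[a [s t]]]; rewrite !inE /= => /and3P[ss tt /eqP st0] ->.
by apply: card_corner_quad => //; apply: contraNneq S0 => <-.
Qed.

End RectangleQuads.

Lemma lb_energy_shadow_rect_quad (F : finFieldType) (lam bet : F) (a b c d : F * F * F) :
  lb_energy lam bet a b c d -> [set a.1; b.1; c.1; d.1] \in rect_quads [set lam; bet].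
Proof.
case=> [[sum_eq _] [[_ _ _ perp_da_ca] sides]].
have b_eq : b.1 = a.1 + (c.1 - a.1) + (d.1 - a.1).
  have ab_cd : a.1 + b.1 = c.1 + d.1 := congr1 fst sum_eq.
  by rewrite subrKC addrA -ab_cd [a.1 + _]addrC addrK.
apply/imsetP; exists (a.1, (c.1 - a.1, d.1 - a.1)); last first.
  by rewrite /corner_quad -b_eq !subrKC.
rewrite !inE /= dotC perp_da_ca eqxx andbT.
have [[ac [_ [_ da]]] | [ac [_ [_ da]]]] := sides;
  by rewrite -[dot _ _]/(sidelen c.1 a.1) sidelenC ac -[dot _ _]/(sidelen d.1 a.1) da !eqxx ?orbT.
Qed.

Lemma exists_cube_between N : (0 < N)%N -> exists K, (N <= K ^ 3 <= 8 * N)%N.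
Proof.
move=> N_gt0; have some_cube : exists K, (N <= K ^ 3)%N.
  by exists N; rewrite -{1}(expn1 N) leq_pexp2l.
have [K N_le_K3 K_min] := ex_minnP some_cube.
exists K; rewrite N_le_K3 /=.
case: K N_le_K3 K_min => [|[|K]] N_le_K3 K_min; first by rewrite exp0n in N_le_K3; lia.
  by rewrite exp1n; lia.
have K1_lt : (K.+1 ^ 3 < N)%N by rewrite ltnNge; apply/negP => /K_min; rewrite ltnn.
apply: leq_trans (_ : _ <= (2 * K.+1) ^ 3)%N _; first by rewrite leq_exp2r //; lia.
by rewrite expnMn leq_mul2l ltnW.
Qed.

Lemma surviving_points_bound (q K a B s : nat) :
    (0 < K)%N -> (q ^ 2 * K ^ 3 <= K ^ 4 * a + B)%N -> (B <= 4 * s ^ 2 * q ^ 3)%N ->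
    (s <= 2)%N -> (32 * q <= K ^ 3)%N ->
  (q ^ 2 <= 2 * K * a)%N.
Proof.
move=> K_gt0 card_a card_B s_le2 K3_ge.
have s2_le4 : (s ^ 2 <= 4)%N by rewrite (leq_exp2r _ 2 (isT : 0 < 2)%N).
have B_le : (2 * B <= q ^ 2 * K ^ 3)%N.
  have := leq_mul s2_le4 (leqnn (q ^ 3)); have := leq_mul (leqnn (q ^ 2)) K3_ge.
  by rewrite (expnS q 2); nia.
have K3_gt0 : (0 < K ^ 3)%N by rewrite expn_gt0 K_gt0.
have K4 : (K ^ 4 = K * K ^ 3)%N := expnS K 3.
by rewrite -(leq_pmul2r K3_gt0); nia.
Qed.

Lemma exists_large_rect_quad_free (F : finFieldType) (S : {set F}) :
  0 \notin S -> (#|S| <= 2)%N ->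
  exists K (A : {set F * F}), [/\ (K ^ 3 <= 256 * #|F|)%N, (#|F| ^ 2 <= 2 * K * #|A|)%N
    & forall e, e \in rect_quads S -> ~~ (e \subset A)].
Proof.
move=> S0 S_le2; have q_gt0 : (0 < #|F|)%N by apply/card_gt0P; exists 0.
(* K^3 >= 32 q makes the surviving quadruples at most half as many as the kept points. *)
have [[|k] /andP[cube_lb cube_ub]] : exists K, (32 * #|F| <= K ^ 3 <= 8 * (32 * #|F|))%N.
  by apply: exists_cube_between; rewrite muln_gt0.
  by move: cube_lb; rewrite exp0n //; lia.
have quads_large e : e \in rect_quads S -> (3 < #|e|)%N by move/(card_rect_quad S0) ->.
have [A [card_A A_free]] := alteration k quads_large.
exists k.+1, A; split => //; first by rewrite mulnA in cube_ub.
apply: surviving_points_bound (card_rect_quads S0) S_le2 cube_lb => //.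
by rewrite card_prod in card_A.
Qed.

Section RealBound.
Local Open Scope R_scope.

Lemma INR_ge_Rpower_five_thirds (q K a : nat) :
  (0 < q)%N -> (K ^ 3 <= 256 * q)%N -> (q ^ 2 <= 2 * K * a)%N ->
  / 14 * Rpower (INR q) (5 / 3) <= INR a.
Proof.
move=> /ltP/lt_0_INR Q_gt0 /leP/le_INR K3_le /leP/le_INR Q2_le.
rewrite !mult_INR (INR_IZR_INZ 256) (INR_IZR_INZ 2) /= in K3_le Q2_le.
have K_ge0 := pos_INR K; have a_ge0 := pos_INR a.
move: (INR q) (INR K) (INR a) Q_gt0 K_ge0 a_ge0 K3_le Q2_le => {q K a} Q K a.
move=> Q_gt0 K_ge0 a_ge0 K3_le Q2_le.
pose y := Rpower Q (1 / 3); pose z := Rpower Q (5 / 3).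
have y_gt0 : 0 < y by apply: exp_pos.
have y3 : y * y * y = Q.
  by rewrite /y -!Rpower_plus -[Q in RHS]Rpower_1 //; congr Rpower; lra.
have zy : z * y = Q ^ 2.
  by rewrite /z /y -Rpower_plus -Rpower_pow //; congr Rpower; simpl; lra.
have K_le : K <= 7 * y.
  apply/Rnot_lt_le => K_gt.
  have K2_gt : 7 * y * (7 * y) < K * K by nra.
  have : 7 * y * (7 * y) * (7 * y) < K * K * K by nra.
  nra.
have : z * y <= 14 * a * y by nra.
by move/(Rmult_le_reg_r _ _ _ y_gt0); rewrite -/z; lra.
Qed.

End RealBound.

Theorem proposition1p5 :
  exists c : R, (0 < c)%R /\
    forall (F : finFieldType), modn #|F| 4 = 3%nat ->
    forall lam bet : F, lam != 0 -> bet != 0 ->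
    exists X : {set F * F * F},
      X \subset paraboloid F /\
      (INR #|X| >= c * Rpower (INR #|F|) (5 / 3))%R /\
      (forall a b c' d, a \in X -> b \in X -> c' \in X -> d \in X ->
         ~ lb_energy lam bet a b c' d).
Proof.
exists (/ 14)%R; split; first lra.
move=> F _ lam bet lam0 bet0.
have S0 : 0 \notin [set lam; bet] by rewrite !inE negb_or ![0 == _]eq_sym lam0 bet0.
have S_le2 : (#|[set lam; bet]| <= 2)%N by rewrite cards2 ltnS leq_b1.
have [K [A [K3_le q2_le A_free]]] := exists_large_rect_quad_free S0 S_le2.
pose lift (v : F * F) : F * F * F := (v, v.1 ^+ 2 + v.2 ^+ 2).
have lift_in p : p \in lift @: A -> p.1 \in A by case/imsetP => v vA ->.
exists (lift @: A); split; [|split].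
- by apply/subsetP => _ /imsetP[v _ ->]; rewrite inE.
- rewrite card_imset; last by move=> v w [].
  by apply/Rle_ge/(INR_ge_Rpower_five_thirds _ K3_le q2_le)/card_gt0P; exists 0.
- move=> a b c d aX bX cX dX /lb_energy_shadow_rect_quad /A_free /negP; apply.
  by apply/subsetP => x; rewrite !inE -!orbA => /or4P[] /eqP ->; apply: lift_in.
Qed.
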